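(* Consider equation (E) and assume each $\tau_i$ is non-decreasing. Suppose either $$\limsup_{t\to+\infty}\prod_{j=1}^{m}\Bigg[\prod_{i=1}^{m}\int_{\tau_j(t)}^{t}p_i(s)\exp\Bigg(\int_{\tau_i(s)}^{\tau_i(t)}\sum_{k=1}^{m}p_k(\xi)\exp\bigg(\int_{\tau_k(\xi)}^{\xi}\sum_{l=1}^{m}p_l(u)\,du\bigg)d\xi\Bigg)ds\Bigg]^{1/m}>\frac{1}{m^{m}},$$ or, assuming in addition that $\liminf_{t\to\infty}\int_{\tau_i(t)}^{t}p_i(s)\,ds=\beta_i\in(0,1/e]$ for every $i$ and letting $\lambda_i^{*}$ be the smallest real root of $e^{\beta_i\lambda}=\lambda$, $$\limsup_{\varepsilon\to0+}\Bigg(\limsup_{t\to+\infty}\prod_{j=1}^{m}\bigg(\prod_{i=1}^{m}\int_{\tau_j(t)}^{t}p_i(s)\exp\Big(\int_{\tau_i(s)}^{\tau_i(t)}\sum_{k=1}^{m}(\lambda_k^{*}-\varepsilon)\,p_k(\xi)\,d\xi\Big)ds\bigg)^{1/m}\Bigg)>\frac{1}{m^{m}}.$$ Then all solutions of (E) oscillate.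
   Context: Equation (E) is $x'(t)+\sum_{i=1}^{m}p_i(t)\,x(\tau_i(t))=0$, $t\ge t_0$, where $m\ge1$ is an integer and, for each $i$, $p_i,\tau_i:[t_0,\infty)\to[0,\infty)$ are continuous, $\tau_i(t)\le t$ for $t\ge t_0$, and $\lim_{t\to\infty}\tau_i(t)=\infty$. Let $\tau(t)=\min_i\tau_i(t)$ and $\tau_{(-1)}(t)=\sup\{s:\tau(s)\le t\}$. A solution of (E) is a function $x\in C([T_0,\infty);\mathbb{R})$ for some $T_0\ge t_0$ which is continuously differentiable on $[\tau_{(-1)}(T_0),\infty)$ and satisfies (E) for $t\ge\tau_{(-1)}(T_0)$. A solution is oscillatory if it has arbitrarily large zeros; ''all solutions oscillate'' means every solution is oscillatory. *)

From Stdlib Require Import Reals Lra List ClassicalEpsilon.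
Import ListNotations.
Open Scope R_scope.

(* Finite sums / products over indices 0 .. m-1 (the paper's 1..m). *)
Definition sumI (m : nat) (f : nat -> R) : R := fold_right Rplus 0 (map f (seq 0 m)).
Definition prodI (m : nat) (f : nat -> R) : R := fold_right Rmult 1 (map f (seq 0 m)).

(* tau(t) = min_i tau_i(t)  (m >= 1 in all uses). *)
Definition tau_min (m : nat) (tau : nat -> R -> R) (t : R) : R :=
  fold_right Rmin (tau 0%nat t) (map (fun i => tau i t) (seq 0 m)).

(* When f is
   Riemann integrable this is exactly RiemannInt (which is independent of
   the integrability proof); otherwise it is an unspecified real. In the
   statement it is only evaluated on continuous integrands over compact
   intervals inside [t0, oo) (for t large). *)
Definition Rint (f : R -> R) (a b : R) : R :=
  epsilon (inhabits 0) (fun v => exists pr : Riemann_integrable f a b, RiemannInt pr = v).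

Definition rootR (m : nat) (x : R) : R :=
  if Rle_dec x 0 then 0 else Rpower x (/ INR m).

Definition cont_on_from (f : R -> R) (a : R) : Prop :=
  forall t, a <= t -> forall eps, eps > 0 -> exists delta, delta > 0 /\
    forall s, a <= s -> Rabs (s - t) < delta -> Rabs (f s - f t) < eps.

Definition deriv_within_from (f : R -> R) (a t d : R) : Prop :=
  forall eps, eps > 0 -> exists delta, delta > 0 /\
    forall h, h <> 0 -> Rabs h < delta -> a <= t + h ->
      Rabs ((f (t + h) - f t) / h - d) < eps.

(* x is a solution of (E) with initial point T0, T0 >= t0:
   x continuous on [T0, oo), continuously differentiable on
   [tau_(-1)(T0), oo) where tau_(-1)(T0) = sup{s >= t0 : tau(s) <= T0},
   and satisfies (E) there. *)
Definition is_solution (m : nat) (t0 : R) (p tau : nat -> R -> R)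
    (x : R -> R) (T0 : R) : Prop :=
  t0 <= T0 /\ cont_on_from x T0 /\
  exists T1 : R,
    is_lub (fun s => t0 <= s /\ tau_min m tau s <= T0) T1 /\
    exists x' : R -> R,
      cont_on_from x' T1 /\
      (forall t, T1 <= t -> deriv_within_from x T1 t (x' t)) /\
      (forall t, T1 <= t -> x' t + sumI m (fun i => p i t * x (tau i t)) = 0).

Definition oscillatory (x : R -> R) (T0 : R) : Prop :=
  forall T, exists t, T <= t /\ T0 <= t /\ x t = 0.

(* limsup_{t -> +oo} F t > c  (limsup possibly +oo), unfolded. *)
Definition limsup_inf_gt (F : R -> R) (c : R) : Prop :=
  exists d, d > c /\ forall T, exists t, T <= t /\ d <= F t.

(* limsup_{eps -> 0+} G(eps) > c, where "G(eps) > d" is given by the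
   predicate Ggt eps d (G(eps) itself being a possibly infinite limsup). *)
Definition limsup_0plus_gt (Ggt : R -> R -> Prop) (c : R) : Prop :=
  exists d, d > c /\ forall delta, delta > 0 ->
    exists eps, 0 < eps /\ eps < delta /\ Ggt eps d.

Definition liminf_inf_eq (F : R -> R) (b : R) : Prop :=
  forall eps, eps > 0 ->
    (exists T, forall t, T <= t -> b - eps < F t) /\
    (forall T, exists t, T <= t /\ F t < b + eps).

Definition Q1 (m : nat) (p tau : nat -> R -> R) (xi : R) : R :=
  sumI m (fun k => p k xi * exp (Rint (fun u => sumI m (fun l => p l u)) (tau k xi) xi)).

Definition F1 (m : nat) (p tau : nat -> R -> R) (t : R) : R :=
  prodI m (fun j => rootR m (prodI m (fun i =>
    Rint (fun s => p i s * exp (Rint (Q1 m p tau) (tau i s) (tau i t))) (tau j t) t))).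

Definition F2 (m : nat) (p tau : nat -> R -> R) (lam : nat -> R) (eps t : R) : R :=
  prodI m (fun j => rootR m (prodI m (fun i =>
    Rint (fun s => p i s * exp (Rint (fun xi => sumI m (fun k => (lam k - eps) * p k xi))
                                     (tau i s) (tau i t))) (tau j t) t))).

From Stdlib Require Import Reals Lra Lia List ClassicalEpsilon Classical.
From Coquelicot Require Import Coquelicot.
Open Scope R_scope.

(* A non-oscillatory solution has eventually constant sign,
   and (E) is linear, so we may assume x > 0 on some [A, oo).  Then
   h = -x'/x = sum_k p_k x(tau_k)/x, and for every continuous g <= h
   integration of h gives x(b) exp(int_a^b g) <= x(a).  Integrating (E) over
   [tau_j(t), t] and applying this with a = tau_i(s), b = tau_i(t) yields, for
   all large t, the linear system
     sum_i x(tau_i t) A_ij(t) <= x(tau_j t),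
     A_ij(t) = int_{tau_j t}^t p_i(s) exp(int_{tau_i s}^{tau_i t} g) ds,
   and an AM-GM argument turns it into prod_j (prod_i A_ij(t))^(1/m) <= 1/m^m.
   Each condition of the theorem exhibits a g for which this fails at
   arbitrarily large t:
   - g = Q1 (first condition), since x is eventually nonincreasing, so that
     h >= sum_l p_l and x(tau_k y)/x(y) >= exp(int_{tau_k y}^y sum_l p_l);
   - g = sum_k (lam_k - eps) p_k (second condition), since the delay ratios
     x(tau_k z)/x(z) are eventually >= lam_k - eps: a bound c on them improves
     to exp(c (beta_k - delta)), and iterating from 1 reaches any value
     below the least root lam_k of exp(beta_k l) = l. *)

Lemma fold_plus_acc (l : list R) (a : R) : fold_right Rplus a l = fold_right Rplus 0 l + a.
Proof. induction l as [|b l IH]; simpl; [ring | rewrite IH; ring]. Qed.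

Lemma fold_mult_acc (l : list R) (a : R) : fold_right Rmult a l = fold_right Rmult 1 l * a.
Proof. induction l as [|b l IH]; simpl; [ring | rewrite IH; ring]. Qed.

Lemma sumI_S (n : nat) (f : nat -> R) : sumI (S n) f = sumI n f + f n.
Proof.
  unfold sumI. rewrite seq_S, map_app, fold_right_app. simpl.
  rewrite fold_plus_acc. ring.
Qed.

Lemma prodI_S (n : nat) (f : nat -> R) : prodI (S n) f = prodI n f * f n.
Proof.
  unfold prodI. rewrite seq_S, map_app, fold_right_app. simpl.
  rewrite fold_mult_acc. ring.
Qed.

Lemma sumI_ext (n : nat) (f g : nat -> R) :
  (forall i, (i < n)%nat -> f i = g i) -> sumI n f = sumI n g.
Proof.
  induction n as [|n IH]; intros H; [reflexivity|].
  rewrite !sumI_S, IH, H; auto.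
Qed.

Lemma sumI_le (n : nat) (f g : nat -> R) :
  (forall i, (i < n)%nat -> f i <= g i) -> sumI n f <= sumI n g.
Proof.
  induction n as [|n IH]; intros H; [apply Rle_refl|].
  rewrite !sumI_S. apply Rplus_le_compat; auto.
Qed.

Lemma sumI_nonneg (n : nat) (f : nat -> R) :
  (forall i, (i < n)%nat -> 0 <= f i) -> 0 <= sumI n f.
Proof.
  induction n as [|n IH]; intros H; [apply Rle_refl|].
  rewrite sumI_S. apply Rplus_le_le_0_compat; auto.
Qed.

Lemma sumI_ge_term (n : nat) (f : nat -> R) (k : nat) :
  (forall i, (i < n)%nat -> 0 <= f i) -> (k < n)%nat -> f k <= sumI n f.
Proof.
  induction n as [|n IH]; intros H Hk; [lia|]. rewrite sumI_S.
  destruct (Nat.eq_dec k n) as [->|Hkn].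
  - assert (0 <= sumI n f) by (apply sumI_nonneg; auto). lra.
  - assert (f k <= sumI n f) by (apply IH; auto; lia).
    assert (0 <= f n) by auto. lra.
Qed.

Lemma sumI_mult_l (n : nat) (c : R) (f : nat -> R) :
  c * sumI n f = sumI n (fun i => c * f i).
Proof. induction n as [|n IH]; [unfold sumI; simpl; ring|]. rewrite !sumI_S, <- IH. ring. Qed.

Lemma prodI_nonneg (n : nat) (f : nat -> R) :
  (forall i, (i < n)%nat -> 0 <= f i) -> 0 <= prodI n f.
Proof.
  induction n as [|n IH]; intros H; [unfold prodI; simpl; lra|].
  rewrite prodI_S. apply Rmult_le_pos; auto.
Qed.

Lemma prodI_pos (n : nat) (f : nat -> R) :
  (forall i, (i < n)%nat -> 0 < f i) -> 0 < prodI n f.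
Proof.
  induction n as [|n IH]; intros H; [unfold prodI; simpl; lra|].
  rewrite prodI_S. apply Rmult_lt_0_compat; auto.
Qed.

Lemma prodI_le (n : nat) (f g : nat -> R) :
  (forall i, (i < n)%nat -> 0 <= f i <= g i) -> prodI n f <= prodI n g.
Proof.
  induction n as [|n IH]; intros H; [apply Rle_refl|]. rewrite !prodI_S.
  apply Rmult_le_compat.
  - apply prodI_nonneg. intros i Hi. apply H. lia.
  - apply H. lia.
  - apply IH. intros i Hi. apply H. lia.
  - apply H. lia.
Qed.

Lemma prodI_mult (n : nat) (f g : nat -> R) :
  prodI n (fun i => f i * g i) = prodI n f * prodI n g.
Proof. induction n as [|n IH]; [unfold prodI; simpl; ring|]. rewrite !prodI_S, IH. ring. Qed.

Lemma prodI_const (n : nat) (c : R) : prodI n (fun _ => c) = c ^ n.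
Proof. induction n as [|n IH]; [reflexivity|]. rewrite prodI_S, IH. simpl. ring. Qed.

(* Arithmetic-geometric mean inequality, by induction on n: the step
   mu^n a <= ((n mu + a)/(n+1))^(n+1) is Bernoulli's inequality. *)

Lemma bernoulli (n : nat) (y : R) : -1 <= y -> 1 + INR n * y <= (1 + y) ^ n.
Proof.
  intros Hy. induction n as [|n IH]; [simpl; lra|].
  rewrite S_INR. simpl. assert (0 <= INR n) by apply pos_INR. nra.
Qed.

Lemma amgm_step (n : nat) (mu a : R) : 0 < mu -> 0 <= a ->
  mu ^ n * a <= ((INR n * mu + a) / INR (S n)) ^ (S n).
Proof.
  intros Hmu Ha.
  assert (Hn : 0 < INR (S n)) by (apply lt_0_INR; lia).
  set (y := (a - mu) / (INR (S n) * mu)).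
  assert (Hmean : (INR n * mu + a) / INR (S n) = mu * (1 + y)).
  { unfold y. rewrite S_INR in *. field. split; lra. }
  assert (Hy : -1 <= y).
  { assert (0 <= mu * (1 + y)).
    { rewrite <- Hmean. apply Rmult_le_pos; [|left; apply Rinv_0_lt_compat; lra].
      assert (0 <= INR n) by apply pos_INR. nra. }
    nra. }
  assert (Hlhs : mu ^ n * a = mu ^ S n * (1 + INR (S n) * y)).
  { unfold y. change (mu ^ S n) with (mu * mu ^ n). rewrite S_INR in *. field. split; lra. }
  rewrite Hmean, Rpow_mult_distr, Hlhs.
  apply Rmult_le_compat_l; [apply pow_le; lra | apply bernoulli; exact Hy].
Qed.

Lemma amgm (n : nat) (f : nat -> R) :
  (forall i, (i < n)%nat -> 0 <= f i) -> prodI n f <= (sumI n f / INR n) ^ n.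
Proof.
  induction n as [|n IH]; intros H; [unfold prodI; simpl; lra|].
  rewrite prodI_S, sumI_S.
  assert (Hf : 0 <= f n) by (apply H; lia).
  destruct n as [|n]; [unfold prodI, sumI; simpl; lra|].
  assert (IHn := IH (fun i Hi => H i (Nat.lt_lt_succ_r _ _ Hi))).
  assert (Hn : 0 < INR (S n)) by (apply lt_0_INR; lia).
  assert (Hs : 0 <= sumI (S n) f) by (apply sumI_nonneg; intros; apply H; lia).
  set (mu := sumI (S n) f / INR (S n)) in *.
  assert (Hmu : 0 <= mu) by (apply Rmult_le_pos; [exact Hs | left; apply Rinv_0_lt_compat; exact Hn]).
  replace (sumI (S n) f + f (S n)) with (INR (S n) * mu + f (S n)) by (unfold mu; field; lra).
  destruct Hmu as [Hmu | Hmu].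
  - apply Rle_trans with (mu ^ S n * f (S n)); [apply Rmult_le_compat_r; auto | apply amgm_step; auto].
  - (* zero mean: the first factors multiply to 0 *)
    rewrite <- Hmu, pow_i in IHn by lia.
    assert (prodI (S n) f = 0) by (pose proof (prodI_nonneg (S n) f ltac:(intros; apply H; lia)); lra).
    rewrite H0, Rmult_0_l. apply pow_le.
    apply Rmult_le_pos; [rewrite <- Hmu; lra | left; apply Rinv_0_lt_compat, lt_0_INR; lia].
Qed.

Lemma pow_lt_compat (n : nat) (s r : R) : 0 <= s < r -> s ^ S n < r ^ S n.
Proof.
  intros H. induction n as [|n IH]; [simpl; lra|].
  change (s * s ^ S n < r * r ^ S n).
  assert (0 <= s ^ S n) by (apply pow_le; lra). nra.
Qed.

Lemma pow_le_inv (n : nat) (r s : R) :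
  (1 <= n)%nat -> 0 <= r -> 0 <= s -> r ^ n <= s ^ n -> r <= s.
Proof.
  intros Hn Hr Hs H. destruct (Rle_lt_dec r s) as [|Hsr]; auto.
  destruct n as [|n]; [lia|]. pose proof (pow_lt_compat n s r). lra.
Qed.

Lemma rootR_nonneg (n : nat) (x : R) : 0 <= rootR n x.
Proof. unfold rootR. destruct (Rle_dec x 0); [lra | left; apply exp_pos]. Qed.

Lemma rootR_pow (n : nat) (x : R) : (1 <= n)%nat -> 0 <= x -> rootR n x ^ n = x.
Proof.
  intros Hn Hx. unfold rootR. destruct (Rle_dec x 0).
  - replace x with 0 by lra. apply pow_i. lia.
  - rewrite <- Rpower_pow by (unfold Rpower; apply exp_pos).
    rewrite Rpower_mult, Rinv_l by (apply not_0_INR; lia). apply Rpower_1. lra.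
Qed.

Lemma rootR_mult (n : nat) (x y : R) :
  0 <= x -> 0 <= y -> rootR n (x * y) = rootR n x * rootR n y.
Proof.
  intros Hx Hy. unfold rootR.
  destruct (Rle_dec x 0), (Rle_dec y 0).
  - destruct (Rle_dec (x * y) 0); [ring | nra].
  - destruct (Rle_dec (x * y) 0); [ring | nra].
  - destruct (Rle_dec (x * y) 0); [ring | nra].
  - destruct (Rle_dec (x * y) 0); [nra |].
    symmetry; apply Rpower_mult_distr; lra.
Qed.

Lemma amgm_root (n : nat) (f : nat -> R) : (1 <= n)%nat ->
  (forall i, (i < n)%nat -> 0 <= f i) -> INR n * rootR n (prodI n f) <= sumI n f.
Proof.
  intros Hn H.
  assert (Hn' : 0 < INR n) by (apply lt_0_INR; lia).
  assert (Hs : 0 <= sumI n f) by (apply sumI_nonneg; auto).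
  assert (Hroot : rootR n (prodI n f) <= sumI n f / INR n).
  { apply (pow_le_inv n); auto.
    - apply rootR_nonneg.
    - apply Rmult_le_pos; auto. left; apply Rinv_0_lt_compat; auto.
    - rewrite rootR_pow by (auto; apply prodI_nonneg; auto). apply amgm; auto. }
  apply Rmult_le_compat_l with (r := INR n) in Hroot; [|lra].
  replace (INR n * (sumI n f / INR n)) with (sumI n f) in Hroot by (field; lra). exact Hroot.
Qed.

(* Indeed AM-GM applied to each
   inequality gives n (prod G)^(1/n) (prod_i A_ij)^(1/n) <= G_j, and
   multiplying over j cancels prod G. *)
Lemma root_product_bound (n : nat) (G : nat -> R) (A : nat -> nat -> R) :
  (1 <= n)%nat ->
  (forall i, (i < n)%nat -> 0 < G i) ->
  (forall i j, (i < n)%nat -> (j < n)%nat -> 0 <= A i j) ->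
  (forall j, (j < n)%nat -> sumI n (fun i => G i * A i j) <= G j) ->
  prodI n (fun j => rootR n (prodI n (fun i => A i j))) <= / (INR n ^ n).
Proof.
  intros Hn HG HA HS.
  set (g := rootR n (prodI n G)).
  assert (HGp : 0 < prodI n G) by (apply prodI_pos; auto).
  assert (Hg : g ^ n = prodI n G) by (apply rootR_pow; auto; lra).
  assert (Hnn : 0 < INR n ^ n) by (apply pow_lt, lt_0_INR; lia).
  set (P := prodI n (fun j => rootR n (prodI n (fun i => A i j)))).
  assert (Hrow : forall j, (j < n)%nat ->
            INR n * (g * rootR n (prodI n (fun i => A i j))) <= G j).
  { intros j Hj. eapply Rle_trans; [|apply HS; auto].
    assert (HGn : 0 <= prodI n G) by lra.
    assert (HAn : 0 <= prodI n (fun i => A i j)) by (apply prodI_nonneg; auto).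
    unfold g. rewrite <- rootR_mult, <- prodI_mult by assumption.
    apply amgm_root; auto. intros i Hi. apply Rmult_le_pos; [left|]; auto. }
  assert (Key : prodI n (fun j => INR n * (g * rootR n (prodI n (fun i => A i j))))
                 <= prodI n G).
  { apply prodI_le. intros j Hj. split; [|apply Hrow; exact Hj].
    apply Rmult_le_pos; [apply pos_INR | apply Rmult_le_pos; apply rootR_nonneg]. }
  rewrite !prodI_mult, !prodI_const, <- Hg in Key. fold P in Key.
  assert (Hgn : 0 < g ^ n) by lra.
  assert (HP : INR n ^ n * P <= 1) by (apply Rmult_le_reg_r with (g ^ n); nra).
  apply Rmult_le_reg_l with (INR n ^ n); [exact Hnn|]. rewrite Rinv_r; lra.
Qed.

Lemma Rint_RInt (f : R -> R) (a b : R) : ex_RInt f a b -> Rint f a b = RInt f a b.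
Proof.
  intros H. unfold Rint.
  assert (Ex : exists v, exists pr : Riemann_integrable f a b, RiemannInt pr = v).
  { exists (RiemannInt (ex_RInt_Reals_0 f a b H)). eauto. }
  destruct (epsilon_spec (inhabits 0) _ Ex) as [pr Hpr]. rewrite <- Hpr.
  symmetry. apply RInt_Reals.
Qed.

Lemma exp_le_compat (a b : R) : a <= b -> exp a <= exp b.
Proof. intros [H | ->]; [left; apply exp_increasing; exact H | apply Rle_refl]. Qed.

Lemma cont_mult (f g : R -> R) (z : R) :
  continuous f z -> continuous g z -> continuous (fun y => f y * g y) z.
Proof. intros; apply (continuous_mult f g); auto. Qed.

Lemma cont_plus (f g : R -> R) (z : R) :
  continuous f z -> continuous g z -> continuous (fun y => f y + g y) z.
Proof. intros; apply (continuous_plus f g); auto. Qed.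

Lemma cont_minus (f g : R -> R) (z : R) :
  continuous f z -> continuous g z -> continuous (fun y => f y - g y) z.
Proof. intros; apply (continuous_minus f g); auto. Qed.

Lemma cont_opp (f : R -> R) (z : R) : continuous f z -> continuous (fun y => - f y) z.
Proof. intros; apply (continuous_opp f); auto. Qed.

Lemma cont_inv (f : R -> R) (z : R) :
  continuous f z -> f z <> 0 -> continuous (fun y => / f y) z.
Proof.
  intros Hf Hz. apply (continuous_comp f Rinv); auto.
  apply continuity_pt_filterlim, continuity_pt_inv; auto. apply continuity_pt_id.
Qed.

Lemma cont_exp (f : R -> R) (z : R) : continuous f z -> continuous (fun y => exp (f y)) z.
Proof. intros H. apply (continuous_comp f exp); auto. apply continuous_exp. Qed.

Lemma cont_sumI (n : nat) (f : nat -> R -> R) (z : R) :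
  (forall i, (i < n)%nat -> continuous (f i) z) ->
  continuous (fun y => sumI n (fun i => f i y)) z.
Proof.
  induction n as [|n IH]; intros H.
  - apply continuous_const.
  - apply (continuous_ext (fun y => sumI n (fun i => f i y) + f n y)).
    { intros y; rewrite sumI_S; reflexivity. }
    apply cont_plus; [apply IH; auto | apply H; lia].
Qed.

Lemma cont_on_from_continuous (f : R -> R) (a z : R) :
  cont_on_from f a -> a < z -> continuous f z.
Proof.
  intros H Hz. apply continuity_pt_filterlim.
  intros eps Heps. destruct (H z ltac:(lra) eps Heps) as [d [Hd Hd2]].
  exists (Rmin d (z - a)). split; [apply Rmin_pos; lra|].
  intros y [_ Hy]. simpl in *. unfold R_dist in *.
  assert (Rabs (y - z) < d) by (eapply Rlt_le_trans; [exact Hy | apply Rmin_l]).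
  assert (Rabs (y - z) < z - a) by (eapply Rlt_le_trans; [exact Hy | apply Rmin_r]).
  apply Hd2; auto. apply Rabs_def2 in H1. lra.
Qed.

Lemma deriv_within_from_is_derive (f : R -> R) (a z d : R) :
  deriv_within_from f a z d -> a < z -> is_derive f z d.
Proof.
  intros H Hz. apply is_derive_Reals. intros eps Heps.
  destruct (H eps Heps) as [dl [Hdl Hdl2]].
  assert (Hp : 0 < Rmin dl (z - a)) by (apply Rmin_pos; lra).
  exists (mkposreal _ Hp). intros h Hh Hh2. simpl in Hh2. apply Hdl2; auto.
  - eapply Rlt_le_trans; [exact Hh2 | apply Rmin_l].
  - assert (Rabs h < z - a) by (eapply Rlt_le_trans; [exact Hh2 | apply Rmin_r]).
    apply Rabs_def2 in H0. lra.
Qed.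

Lemma ex_RInt_cont (f : R -> R) (a b : R) :
  a <= b -> (forall z, a <= z <= b -> continuous f z) -> ex_RInt f a b.
Proof.
  intros Hab H. apply (ex_RInt_continuous (V := R_CompleteNormedModule)). intros z Hz.
  rewrite Rmin_left, Rmax_right in Hz by lra. auto.
Qed.

Lemma RInt_scal_R (f : R -> R) (a b c : R) :
  ex_RInt f a b -> RInt (fun s => c * f s) a b = c * RInt f a b.
Proof. intros H. apply (RInt_scal f a b c H). Qed.

Lemma RInt_sumI (n : nat) (f : nat -> R -> R) (a b : R) :
  (forall i, (i < n)%nat -> ex_RInt (f i) a b) ->
  ex_RInt (fun s => sumI n (fun i => f i s)) a b /\
  RInt (fun s => sumI n (fun i => f i s)) a b = sumI n (fun i => RInt (f i) a b).
Proof.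
  induction n as [|n IH]; intros H.
  - change (ex_RInt (fun _ => 0) a b /\ RInt (fun _ => 0) a b = 0).
    split; [apply ex_RInt_const |].
    rewrite RInt_const. unfold scal; simpl; unfold mult; simpl. ring.
  - destruct IH as [IH1 IH2]; [intros; apply H; lia|].
    assert (Hn : ex_RInt (f n) a b) by (apply H; lia).
    assert (Ext : forall s, plus (sumI n (fun i => f i s)) (f n s) = sumI (S n) (fun i => f i s))
      by (intros; rewrite sumI_S; reflexivity).
    split.
    + apply (ex_RInt_ext (fun s => plus (sumI n (fun i => f i s)) (f n s))); [intros; apply Ext|].
      apply (ex_RInt_plus (fun s => sumI n (fun i => f i s)) (f n)); auto.
    + rewrite (RInt_ext _ (fun s => plus (sumI n (fun i => f i s)) (f n s)))
        by (intros; symmetry; apply Ext).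
      rewrite (RInt_plus (fun s => sumI n (fun i => f i s)) (f n)), sumI_S, IH2 by auto.
      reflexivity.
Qed.

Lemma ftc_R (f df : R -> R) (a b : R) : a <= b ->
  (forall z, a <= z <= b -> is_derive f z (df z)) ->
  (forall z, a <= z <= b -> continuous df z) ->
  ex_RInt df a b /\ RInt df a b = f b - f a.
Proof.
  intros Hab H1 H2.
  assert (H : is_RInt df a b (minus (f b) (f a))).
  { apply (is_RInt_derive (V := R_CompleteNormedModule));
      rewrite Rmin_left, Rmax_right by lra; auto. }
  split; [exists (minus (f b) (f a)); exact H|].
  apply (is_RInt_unique (V := R_CompleteNormedModule)). exact H.
Qed.

(* Continuity of y |-> int_{u y}^{v y} g when g is continuous on [C, oo) and
   the bounds stay in (C, oo): it is the difference of two compositions with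
   the continuous primitive v |-> int_C^v g. *)

Lemma cont_RInt_upper (g : R -> R) (C u : R) :
  (forall y, C <= y -> continuous g y) -> C < u -> continuous (fun v => RInt g C v) u.
Proof.
  intros Hg Hu. apply (ex_derive_continuous (K := R_AbsRing) (V := R_NormedModule)).
  exists (g u). apply (is_derive_RInt g (fun v => RInt g C v) C).
  - apply (locally_interval _ u C p_infty); simpl; auto.
    intros y Hy _. apply (RInt_correct (V := R_CompleteNormedModule)).
    apply ex_RInt_cont; [lra | intros; apply Hg; lra].
  - apply Hg; lra.
Qed.

Lemma cont_Rint_bounds (g u v : R -> R) (C z : R) :
  (forall y, C <= y -> continuous g y) ->
  continuous u z -> continuous v z -> C < u z -> C < v z ->
  continuous (fun y => Rint g (u y) (v y)) z.
Proof.
  intros Hg Hu Hv Huz Hvz.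
  assert (Lu : locally z (fun y => C < u y)).
  { apply (Hu (fun w => C < w)). apply (locally_interval _ (u z) C p_infty); simpl; auto. }
  assert (Lv : locally z (fun y => C < v y)).
  { apply (Hv (fun w => C < w)). apply (locally_interval _ (v z) C p_infty); simpl; auto. }
  apply (continuous_ext_loc _ (fun y => RInt g C (v y) - RInt g C (u y))).
  - generalize (filter_and _ _ Lu Lv). apply filter_imp. intros y [H1 H2].
    assert (E1 : ex_RInt g C (u y)) by (apply ex_RInt_cont; [lra | intros; apply Hg; lra]).
    assert (E2 : ex_RInt g C (v y)) by (apply ex_RInt_cont; [lra | intros; apply Hg; lra]).
    assert (E3 : ex_RInt g (u y) (v y))
      by (apply (ex_RInt_Chasles _ _ C); [apply ex_RInt_swap |]; auto).
    rewrite Rint_RInt, <- (RInt_Chasles g C (u y) (v y)) by auto.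
    unfold plus; simpl. ring.
  - apply cont_minus;
      [apply (continuous_comp v (fun w => RInt g C w))
      | apply (continuous_comp u (fun w => RInt g C w))]; auto; apply cont_RInt_upper; auto.
Qed.

Lemma eventually_forall_lt (m : nat) (P : nat -> R -> Prop) :
  (forall k, (k < m)%nat -> exists T, forall z, T <= z -> P k z) ->
  exists T, forall k z, (k < m)%nat -> T <= z -> P k z.
Proof.
  induction m as [|m IH]; intros H; [exists 0; intros; lia|].
  destruct IH as [T1 HT1]; [intros; apply H; lia|].
  destruct (H m (Nat.lt_succ_diag_r m)) as [T2 HT2].
  exists (Rmax T1 T2). intros k z Hk Hz. destruct (Nat.eq_dec k m) as [->|Hkm].
  - apply HT2. eapply Rle_trans; [apply Rmax_r | exact Hz].
  - apply HT1; [lia | eapply Rle_trans; [apply Rmax_l | exact Hz]].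
Qed.

Lemma fixed_point_below (beta L : R) : 0 <= L -> exp (beta * L) <= L ->
  exists y, 0 <= y <= L /\ exp (beta * y) = y.
Proof.
  intros HL Hfix.
  set (phi := fun y => exp (beta * y) - y).
  assert (Hphi : continuity phi).
  { intros y. apply continuity_pt_filterlim. unfold phi.
    apply cont_minus; [apply cont_exp, cont_mult; [apply continuous_const|] |]; apply continuous_id. }
  destruct (IVT_gen phi 0 L 0 Hphi) as [y [Hy1 Hy2]].
  { split; [eapply Rle_trans; [apply Rmin_r | unfold phi; lra]|].
    eapply Rle_trans; [|apply Rmax_l]. unfold phi. rewrite Rmult_0_r, exp_0. lra. }
  rewrite Rmin_left, Rmax_right in Hy1 by lra.
  exists y. split; [exact Hy1 | unfold phi in Hy2; lra].
Qed.

Lemma exp_gap (beta L : R) : 0 < beta -> 0 < L -> ln L < beta * L ->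
  exists eta delta, 0 < eta /\ 0 < delta /\
    forall c, L - eta < c <= L -> L < exp (c * (beta - delta)).
Proof.
  intros Hb HL Hgap.
  set (g0 := beta * L - ln L).
  exists (g0 / (4 * beta)), (g0 / (4 * L)).
  split; [apply Rdiv_lt_0_compat; unfold g0; lra|].
  split; [apply Rdiv_lt_0_compat; unfold g0; lra|].
  intros c [Hc1 Hc2].
  assert (E1 : g0 / (4 * beta) * beta = g0 / 4) by (field; lra).
  assert (E2 : L * (g0 / (4 * L)) = g0 / 4) by (field; lra).
  assert (Hd : 0 < g0 / (4 * L)) by (apply Rdiv_lt_0_compat; unfold g0; lra).
  assert (Hlog : ln L < c * (beta - g0 / (4 * L))).
  { assert (c * beta > (L - g0 / (4 * beta)) * beta) by nra.
    assert (c * (g0 / (4 * L)) <= L * (g0 / (4 * L))) by nra.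
    unfold g0 in *. nra. }
  rewrite <- (exp_ln L) at 1 by exact HL. apply exp_increasing. exact Hlog.
Qed.

(* Let S be a down-closed set of
   reals containing 1 and stable under c |-> exp(c (beta - delta)) for every
   delta > 0.  Then S contains lam - eps for every eps > 0, where lam is the
   least root of exp(beta l) = l: otherwise the supremum L of S n [1, oo)
   satisfies exp(beta L) <= L by [exp_gap], so a root lies below L. *)
Lemma bootstrap_to_least_root (beta lam eps : R) (S : R -> Prop) :
  0 < beta -> (forall l, exp (beta * l) = l -> lam <= l) -> 0 < eps ->
  (forall c c', S c -> c' <= c -> S c') -> S 1 ->
  (forall c delta, 1 <= c -> S c -> 0 < delta -> S (exp (c * (beta - delta)))) ->
  S (lam - eps).
Proof.
  intros Hb Hmin Heps Hdown H1 Hstep.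
  apply NNPP. intros Hn.
  set (E := fun c => 1 <= c /\ S c).
  assert (Ebd : forall c, E c -> c < lam - eps).
  { intros c [_ Hc]. destruct (Rlt_le_dec c (lam - eps)) as [|Hge]; auto.
    exfalso. apply Hn. eapply Hdown; eauto. }
  destruct (completeness E) as [L [HL1 HL2]].
  { exists (lam - eps). intros c Hc. left. apply Ebd; auto. }
  { exists 1. split; [lra | exact H1]. }
  assert (L1 : 1 <= L) by (apply HL1; split; [lra | exact H1]).
  assert (L2 : L <= lam - eps) by (apply HL2; intros c Hc; left; apply Ebd; auto).
  assert (Hfix : exp (beta * L) <= L).
  { destruct (Rle_lt_dec (exp (beta * L)) L) as [|Hgt]; auto. exfalso.
    assert (HlnL : ln L < beta * L)
      by (rewrite <- (ln_exp (beta * L)); apply ln_increasing; lra).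
    destruct (exp_gap beta L Hb ltac:(lra) HlnL) as [eta [delta [Heta [Hdelta Hgap]]]].
    assert (Hc : exists c, E c /\ L - eta < c).
    { apply NNPP. intros Hno. assert (L <= L - eta); [|lra].
      apply HL2. intros c Hc. destruct (Rle_lt_dec c (L - eta)); auto.
      exfalso; apply Hno; eauto. }
    destruct Hc as [c [[Hc1 Hc2] Hc3]].
    assert (Hc4 : c <= L) by (apply HL1; split; auto).
    pose proof (Hgap c ltac:(lra)) as Hbig.
    assert (E (exp (c * (beta - delta)))).
    { split; [|apply Hstep; auto]. lra. }
    assert (exp (c * (beta - delta)) <= L) by (apply HL1; auto). lra. }
  destruct (fixed_point_below beta L ltac:(lra) Hfix) as [y [Hy Hroot]].
  assert (lam <= y) by (apply Hmin; exact Hroot). lra.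
Qed.

Record positive_solution (m : nat) (p tau : nat -> R -> R) (x x' : R -> R) (A : R)
  : Prop := {
  ps_p_cont : forall i z, (i < m)%nat -> A <= z -> continuous (p i) z;
  ps_tau_cont : forall i z, (i < m)%nat -> A <= z -> continuous (tau i) z;
  ps_p_nonneg : forall i z, (i < m)%nat -> A <= z -> 0 <= p i z;
  ps_tau_le : forall i z, (i < m)%nat -> A <= z -> tau i z <= z;
  ps_tau_mono : forall i s z, (i < m)%nat -> A <= s -> s <= z -> tau i s <= tau i z;
  ps_tau_lim : forall M, exists T, forall i z, (i < m)%nat -> T <= z -> M <= tau i z;
  ps_deriv : forall z, A <= z -> is_derive x z (x' z);
  ps_deriv_cont : forall z, A <= z -> continuous x' z;
  ps_equation : forall z, A <= z -> x' z = - sumI m (fun i => p i z * x (tau i z));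
  ps_pos : forall z, A <= z -> 0 < x z }.

Arguments ps_p_cont {m p tau x x' A}.
Arguments ps_tau_cont {m p tau x x' A}.
Arguments ps_p_nonneg {m p tau x x' A}.
Arguments ps_tau_le {m p tau x x' A}.
Arguments ps_tau_mono {m p tau x x' A}.
Arguments ps_tau_lim {m p tau x x' A}.
Arguments ps_deriv {m p tau x x' A}.
Arguments ps_deriv_cont {m p tau x x' A}.
Arguments ps_equation {m p tau x x' A}.
Arguments ps_pos {m p tau x x' A}.

Definition logderiv (x x' : R -> R) (z : R) : R := - x' z / x z.

(* The expression of the conditions, for a general exponent density g:
   F1 is Fg with g = Q1, F2 is Fg with g = sum_k (lam_k - eps) p_k. *)
Definition Fg (m : nat) (p tau : nat -> R -> R) (g : R -> R) (t : R) : R :=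
  prodI m (fun j => rootR m (prodI m (fun i =>
    Rint (fun s => p i s * exp (Rint g (tau i s) (tau i t))) (tau j t) t))).

Section PositiveSolution.

Variables (m : nat) (p tau : nat -> R -> R) (x x' : R -> R) (A : R).
Hypothesis Hx : positive_solution m p tau x x' A.

Lemma late_delays (M : R) :
  exists T, A <= T /\ forall i z, (i < m)%nat -> T <= z -> M <= tau i z.
Proof.
  destruct (ps_tau_lim Hx M) as [T HT]. exists (Rmax A T). split; [apply Rmax_l|].
  intros i z Hi Hz. apply HT; [exact Hi | eapply Rle_trans; [apply Rmax_r | exact Hz]].
Qed.

Lemma ps_x_cont (z : R) : A <= z -> continuous x z.
Proof.
  intros Hz. apply (ex_derive_continuous (K := R_AbsRing) (V := R_NormedModule)).
  exists (x' z). apply (ps_deriv Hx); exact Hz.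
Qed.

Lemma logderiv_cont (z : R) : A <= z -> continuous (logderiv x x') z.
Proof.
  intros Hz. unfold logderiv. apply cont_mult; [apply cont_opp, (ps_deriv_cont Hx); exact Hz|].
  apply cont_inv; [apply ps_x_cont; exact Hz | pose proof (ps_pos Hx z Hz); lra].
Qed.

Lemma logderiv_expand (z : R) : A <= z ->
  logderiv x x' z = sumI m (fun k => p k z * (x (tau k z) / x z)).
Proof.
  intros Hz. unfold logderiv. rewrite (ps_equation Hx z Hz).
  assert (Hp := ps_pos Hx z Hz).
  replace (- - sumI m (fun i => p i z * x (tau i z)) / x z)
    with (/ x z * sumI m (fun i => p i z * x (tau i z))) by (field; lra).
  rewrite sumI_mult_l. apply sumI_ext. intros; field; lra.
Qed.

Lemma logderiv_ge_term (k : nat) (z : R) : (k < m)%nat -> A <= z ->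
  (forall i, (i < m)%nat -> A <= tau i z) ->
  p k z * (x (tau k z) / x z) <= logderiv x x' z.
Proof.
  intros Hk Hz Htau. rewrite logderiv_expand by exact Hz.
  apply (sumI_ge_term m (fun i => p i z * (x (tau i z) / x z))); [|exact Hk].
  intros i Hi. apply Rmult_le_pos; [apply (ps_p_nonneg Hx); auto|].
  left. apply Rdiv_lt_0_compat; apply (ps_pos Hx); auto.
Qed.

Lemma ln_drop (a b : R) : A <= a -> a <= b ->
  ex_RInt (logderiv x x') a b /\ ln (x a) - ln (x b) = RInt (logderiv x x') a b.
Proof.
  intros Ha Hab.
  destruct (ftc_R (fun z => - ln (x z)) (logderiv x x') a b Hab) as [E1 E2].
  - intros z Hz. assert (Hp := ps_pos Hx z ltac:(lra)).
    unfold logderiv. replace (- x' z / x z) with (opp (scal (x' z) (/ x z)))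
      by (unfold opp, scal; simpl; unfold mult; simpl; field; lra).
    apply (is_derive_opp (K := R_AbsRing) (V := R_NormedModule) (fun z => ln (x z))).
    apply (is_derive_comp ln x z); [apply is_derive_ln; exact Hp | apply (ps_deriv Hx); lra].
  - intros z Hz. apply logderiv_cont. lra.
  - split; [exact E1 | rewrite E2; ring].
Qed.

Lemma integrated_equation (a b : R) : A <= a -> a <= b ->
  let S := fun s => sumI m (fun i => p i s * x (tau i s)) in
  ex_RInt S a b /\ RInt S a b = x a - x b.
Proof.
  intros Ha Hab S.
  destruct (ftc_R (fun z => - x z) (fun z => - x' z) a b Hab) as [F1 F2].
  - intros z Hz. apply (is_derive_opp (K := R_AbsRing) (V := R_NormedModule) x).
    apply (ps_deriv Hx); lra.
  - intros z Hz. apply cont_opp, (ps_deriv_cont Hx); lra.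
  - assert (Ext : forall z, Rmin a b < z < Rmax a b -> - x' z = S z).
    { intros z Hz. rewrite Rmin_left, Rmax_right in Hz by lra. unfold S.
      rewrite (ps_equation Hx z) by lra. ring. }
    split; [apply (ex_RInt_ext (fun z => - x' z)); auto|].
    rewrite (RInt_ext S (fun z => - x' z)) by (intros z Hz; symmetry; auto).
    rewrite F2. simpl. lra.
Qed.

Section Comparison.

Variables (g : R -> R) (C : R).
Hypothesis HC : A <= C.
Hypothesis Hg_cont : forall y, C <= y -> continuous g y.
Hypothesis Hg_le : forall y, C <= y -> g y <= logderiv x x' y.

Lemma exp_integral_le (a b : R) : C <= a -> a <= b -> x b * exp (RInt g a b) <= x a.
Proof.
  intros Ha Hab.
  destruct (ln_drop a b ltac:(lra) Hab) as [E1 E2].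
  assert (Hint : RInt g a b <= RInt (logderiv x x') a b).
  { apply RInt_le; auto; [apply ex_RInt_cont; auto; intros; apply Hg_cont; lra|].
    intros; apply Hg_le; lra. }
  assert (Pa := ps_pos Hx a ltac:(lra)). assert (Pb := ps_pos Hx b ltac:(lra)).
  assert (Hexp : exp (RInt g a b) <= x a / x b).
  { replace (x a / x b) with (exp (ln (x a) - ln (x b)))
      by (unfold Rminus; rewrite exp_plus, exp_Ropp, !exp_ln by auto; reflexivity).
    apply exp_le_compat. lra. }
  apply Rmult_le_compat_l with (r := x b) in Hexp; [|lra].
  replace (x b * (x a / x b)) with (x a) in Hexp by (field; lra). exact Hexp.
Qed.

Definition kernel (i : nat) (t s : R) : R := p i s * exp (Rint g (tau i s) (tau i t)).

Section Window.

Variables (a t : R).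
Hypothesis Ha : A <= a.
Hypothesis Hat : a <= t.
Hypothesis Hwindow : forall i s, (i < m)%nat -> a <= s -> C < tau i s.

Lemma kernel_cont (i : nat) (s : R) : (i < m)%nat -> a <= s -> continuous (kernel i t) s.
Proof.
  intros Hi Hs. unfold kernel. apply cont_mult; [apply (ps_p_cont Hx); auto; lra|].
  apply cont_exp, (cont_Rint_bounds g (tau i) (fun _ => tau i t) C); auto.
  - apply (ps_tau_cont Hx); auto; lra.
  - apply continuous_const.
Qed.

Lemma kernel_integrable (i : nat) : (i < m)%nat -> ex_RInt (kernel i t) a t.
Proof. intros Hi. apply ex_RInt_cont; auto. intros s Hs. apply kernel_cont; auto; lra. Qed.

Lemma kernel_integral_nonneg (i : nat) : (i < m)%nat -> 0 <= Rint (kernel i t) a t.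
Proof.
  intros Hi. rewrite Rint_RInt by (apply kernel_integrable; exact Hi).
  apply RInt_ge_0; [exact Hat | apply kernel_integrable; exact Hi|].
  intros s Hs. apply Rmult_le_pos; [apply (ps_p_nonneg Hx); auto; lra | left; apply exp_pos].
Qed.

(* Integrating (E) over [a, t] and bounding x(tau_i s) below by
   x(tau_i t) exp(int_{tau_i s}^{tau_i t} g) yields the linear inequality
   sum_i x(tau_i t) int_a^t kernel_i <= x(a). *)
Lemma kernel_row_sum :
  sumI m (fun i => x (tau i t) * Rint (kernel i t) a t) <= x a.
Proof.
  destruct (integrated_equation a t Ha Hat) as [ES1 ES2].
  destruct (RInt_sumI m (fun i s => x (tau i t) * kernel i t s) a t) as [EL1 EL2].
  { intros i Hi. apply ex_RInt_cont; auto. intros z Hz.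
    apply cont_mult; [apply continuous_const | apply kernel_cont; auto; lra]. }
  assert (Hpointwise : forall i s, (i < m)%nat -> a <= s <= t ->
            x (tau i t) * kernel i t s <= p i s * x (tau i s)).
  { intros i s Hi Hs. unfold kernel.
    assert (C < tau i s) by (apply Hwindow; auto; lra).
    assert (tau i s <= tau i t) by (apply (ps_tau_mono Hx); auto; lra).
    rewrite Rint_RInt by (apply ex_RInt_cont; auto; intros; apply Hg_cont; lra).
    pose proof (exp_integral_le (tau i s) (tau i t) ltac:(lra) ltac:(lra)).
    assert (0 <= p i s) by (apply (ps_p_nonneg Hx); auto; lra). nra. }
  assert (Hle : RInt (fun s => sumI m (fun i => x (tau i t) * kernel i t s)) a t
                <= RInt (fun s => sumI m (fun i => p i s * x (tau i s))) a t).
  { apply RInt_le; auto. intros s Hs. apply sumI_le. intros i Hi.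
    apply Hpointwise; auto; lra. }
  rewrite EL2, ES2 in Hle.
  assert (0 < x t) by (apply (ps_pos Hx); lra).
  rewrite (sumI_ext m _ (fun i => RInt (fun s => x (tau i t) * kernel i t s) a t)); [lra|].
  intros i Hi. rewrite RInt_scal_R, Rint_RInt by (apply kernel_integrable; exact Hi).
  reflexivity.
Qed.

End Window.

(* For all large t the windows [tau_j t, t] qualify, and the algebraic
   lemma turns the m linear inequalities into Fg(t) <= 1/m^m. *)
Lemma Fg_eventually_le : (1 <= m)%nat ->
  exists E, forall t, E <= t -> Fg m p tau g t <= / (INR m ^ m).
Proof.
  intros Hm.
  destruct (late_delays (C + 1)) as [D [HD HDtau]].
  destruct (late_delays D) as [E [HE HEtau]].
  exists E. intros t Ht.
  assert (Hwin : forall j, (j < m)%nat -> D <= tau j t /\ tau j t <= t).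
  { intros j Hj. split; [apply HEtau; auto | apply (ps_tau_le Hx); auto; lra]. }
  assert (Hlate : forall j i s, (j < m)%nat -> (i < m)%nat -> tau j t <= s -> C < tau i s).
  { intros j i s Hj Hi Hs. pose proof (HDtau i s Hi ltac:(pose proof (Hwin j Hj); lra)). lra. }
  apply (root_product_bound m (fun i => x (tau i t))
           (fun i j => Rint (kernel i t) (tau j t) t) Hm).
  - intros i Hi. apply (ps_pos Hx). destruct (Hwin i Hi). lra.
  - intros i j Hi Hj. destruct (Hwin j Hj).
    apply kernel_integral_nonneg; auto; [lra | intros i' s Hi' Hs; exact (Hlate j i' s Hj Hi' Hs)].
  - intros j Hj. destruct (Hwin j Hj).
    apply kernel_row_sum; auto; [lra | intros i' s Hi' Hs; exact (Hlate j i' s Hj Hi' Hs)].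
Qed.

End Comparison.

(* With g = 0: x is eventually nonincreasing. *)
Lemma x_eventually_nonincreasing :
  exists A1, A <= A1 /\ forall a b, A1 <= a -> a <= b -> x b <= x a.
Proof.
  destruct (late_delays A) as [T [HT HTtau]].
  exists T. split; [exact HT|]. intros a b Ha Hab.
  assert (Hh : forall y, T <= y -> 0 <= logderiv x x' y).
  { intros y Hy. rewrite logderiv_expand by lra. apply sumI_nonneg. intros i Hi.
    apply Rmult_le_pos; [apply (ps_p_nonneg Hx); auto; lra|].
    left. apply Rdiv_lt_0_compat; apply (ps_pos Hx); [apply HTtau|]; auto; lra. }
  pose proof (exp_integral_le (fun _ => 0) T HT (fun y _ => continuous_const 0 y) Hh a b Ha Hab)
    as Hle.
  rewrite RInt_const in Hle. unfold scal in Hle; simpl in Hle; unfold mult in Hle; simpl in Hle.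
  rewrite Rmult_0_r, exp_0, Rmult_1_r in Hle. exact Hle.
Qed.

Lemma delay_ratio_ge_1 :
  exists A2, A <= A2 /\ forall z k, A2 <= z -> (k < m)%nat -> 1 <= x (tau k z) / x z.
Proof.
  destruct x_eventually_nonincreasing as [A1 [HA1 Hmono]].
  destruct (late_delays A1) as [T [HT HTtau]].
  exists T. split; [exact HT|]. intros z k Hz Hk.
  assert (A1 <= tau k z) by (apply HTtau; auto).
  assert (tau k z <= z) by (apply (ps_tau_le Hx); auto; lra).
  assert (x z <= x (tau k z)) by (apply Hmono; auto).
  assert (0 < x z) by (apply (ps_pos Hx); lra).
  apply Rmult_le_reg_r with (x z); auto. unfold Rdiv. rewrite Rmult_assoc, Rinv_l; lra.
Qed.

Lemma sum_p_le_logderiv :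
  exists A2, A <= A2 /\ forall z, A2 <= z -> sumI m (fun l => p l z) <= logderiv x x' z.
Proof.
  destruct delay_ratio_ge_1 as [A2 [HA2 Hratio]].
  exists A2. split; [exact HA2|]. intros z Hz.
  rewrite logderiv_expand by lra. apply sumI_le. intros i Hi.
  rewrite <- (Rmult_1_r (p i z)) at 1. apply Rmult_le_compat_l.
  - apply (ps_p_nonneg Hx); auto; lra.
  - apply Hratio; auto.
Qed.

(* First condition: with g = sum_l p_l the comparison lemma gives
   x(tau_k y)/x(y) >= exp(int_{tau_k y}^y sum_l p_l), i.e. Q1 <= -x'/x. *)
Lemma Q1_le_logderiv : exists C, A <= C /\
  (forall y, C <= y -> continuous (Q1 m p tau) y) /\
  (forall y, C <= y -> Q1 m p tau y <= logderiv x x' y).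
Proof.
  destruct sum_p_le_logderiv as [A2 [HA2 HP]].
  destruct (late_delays (A2 + 1)) as [T [HT HTtau]].
  set (P := fun u => sumI m (fun l => p l u)).
  assert (HPc : forall y, A2 <= y -> continuous P y).
  { intros y Hy. apply cont_sumI. intros; apply (ps_p_cont Hx); auto; lra. }
  assert (Hwin : forall k y, (k < m)%nat -> T <= y -> A2 + 1 <= tau k y /\ tau k y <= y).
  { intros k y Hk Hy. split; [apply HTtau; auto | apply (ps_tau_le Hx); auto; lra]. }
  exists T. split; [exact HT|]. split.
  - intros y Hy. unfold Q1. apply cont_sumI. intros k Hk. destruct (Hwin k y Hk Hy).
    apply cont_mult; [apply (ps_p_cont Hx); auto; lra|].
    apply cont_exp, (cont_Rint_bounds P (tau k) (fun y => y) A2); auto; try lra.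
    + apply (ps_tau_cont Hx); auto; lra.
    + apply continuous_id.
  - intros y Hy. rewrite logderiv_expand by lra. unfold Q1. apply sumI_le.
    intros k Hk. destruct (Hwin k y Hk Hy).
    apply Rmult_le_compat_l; [apply (ps_p_nonneg Hx); auto; lra|].
    fold P. rewrite Rint_RInt by (apply ex_RInt_cont; auto; intros; apply HPc; lra).
    pose proof (exp_integral_le P A2 HA2 HPc HP (tau k y) y ltac:(lra) ltac:(lra)).
    assert (0 < x y) by (apply (ps_pos Hx); lra).
    apply Rmult_le_reg_r with (x y); auto. unfold Rdiv. rewrite Rmult_assoc, Rinv_l by lra. lra.
Qed.

(* Second condition, one bootstrap step: if eventually x(tau_k z)/x(z) >= c
   then -x'/x >= c p_k eventually, and since int_{tau_k z}^z p_k is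
   eventually > beta_k - delta, the ratio is eventually >= exp(c (beta_k - delta)). *)
Lemma delay_ratio_step (k : nat) (beta c delta : R) : (k < m)%nat ->
  liminf_inf_eq (fun t => Rint (p k) (tau k t) t) beta -> 0 <= c -> 0 < delta ->
  (exists T, forall z, T <= z -> c <= x (tau k z) / x z) ->
  exists T, forall z, T <= z -> exp (c * (beta - delta)) <= x (tau k z) / x z.
Proof.
  intros Hk Hlim Hc Hd [T HT].
  destruct (Hlim delta Hd) as [[Tb HTb] _].
  destruct (late_delays A) as [C0 [HC0 HC0tau]].
  set (C := Rmax C0 T).
  assert (HC : A <= C) by (eapply Rle_trans; [exact HC0 | apply Rmax_l]).
  assert (Hgc : forall y, C <= y -> continuous (fun u => c * p k u) y).
  { intros y Hy. apply cont_mult; [apply continuous_const | apply (ps_p_cont Hx); auto; lra]. }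
  assert (Hgh : forall y, C <= y -> c * p k y <= logderiv x x' y).
  { intros y Hy.
    assert (C0 <= y /\ T <= y) as [Hy0 HyT] by (split; eapply Rle_trans; eauto; [apply Rmax_l | apply Rmax_r]).
    eapply Rle_trans; [|apply (logderiv_ge_term k y Hk); [lra | intros; apply HC0tau; auto]].
    rewrite Rmult_comm. apply Rmult_le_compat_l; [apply (ps_p_nonneg Hx); auto; lra | apply HT; exact HyT]. }
  destruct (late_delays C) as [Tc [HTc HTctau]].
  exists (Rmax Tb Tc). intros z Hz.
  assert (Tb <= z /\ Tc <= z) as [Hzb Hzc] by (split; eapply Rle_trans; eauto; [apply Rmax_l | apply Rmax_r]).
  assert (Htk : C <= tau k z) by (apply HTctau; auto).
  assert (Htz : tau k z <= z) by (apply (ps_tau_le Hx); auto; lra).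
  pose proof (exp_integral_le (fun u => c * p k u) C HC Hgc Hgh (tau k z) z Htk Htz) as Hcmp.
  assert (Ex : ex_RInt (p k) (tau k z) z).
  { apply ex_RInt_cont; auto. intros; apply (ps_p_cont Hx); auto; lra. }
  rewrite RInt_scal_R in Hcmp by exact Ex.
  assert (Hb := HTb z Hzb). simpl in Hb. rewrite Rint_RInt in Hb by exact Ex.
  assert (0 < x z) by (apply (ps_pos Hx); lra).
  assert (exp (c * (beta - delta)) <= exp (c * RInt (p k) (tau k z) z))
    by (apply exp_le_compat; nra).
  apply Rmult_le_reg_r with (x z); auto. unfold Rdiv. rewrite Rmult_assoc, Rinv_l by lra. nra.
Qed.

(* Iterating the step from the trivial bound 1: the ratios are eventually
   >= lam_k - eps, lam_k the least root of exp(beta_k l) = l. *)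
Lemma delay_ratio_lower_bound (k : nat) (beta lam : R) : (k < m)%nat ->
  liminf_inf_eq (fun t => Rint (p k) (tau k t) t) beta -> 0 < beta ->
  (forall l, exp (beta * l) = l -> lam <= l) ->
  forall eps, eps > 0 -> exists T, forall z, T <= z -> lam - eps <= x (tau k z) / x z.
Proof.
  intros Hk Hlim Hb Hmin eps Heps.
  apply (bootstrap_to_least_root beta lam eps
           (fun c => exists T, forall z, T <= z -> c <= x (tau k z) / x z)); auto.
  - intros c c' [T HT] Hc. exists T. intros z Hz. specialize (HT z Hz). lra.
  - destruct delay_ratio_ge_1 as [A2 [_ HA2]]. exists A2. intros; apply HA2; auto.
  - intros c delta Hc HS Hd. apply (delay_ratio_step k beta c delta); auto. lra.
Qed.

(* Neither condition of the theorem can hold in the presence of a positive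
   solution: each provides some g <= -x'/x for which Fg exceeds 1/m^m
   at arbitrarily large times, contradicting [Fg_eventually_le]. *)
Lemma positive_solution_not_cond1 : (1 <= m)%nat ->
  ~ limsup_inf_gt (F1 m p tau) (/ (INR m ^ m)).
Proof.
  intros Hm [d [Hd Hfreq]].
  destruct Q1_le_logderiv as [C [HC [Hgc Hgh]]].
  destruct (Fg_eventually_le _ C HC Hgc Hgh Hm) as [E HE].
  destruct (Hfreq E) as [t [Ht Hdt]].
  specialize (HE t Ht). change (Fg m p tau (Q1 m p tau) t) with (F1 m p tau t) in HE. lra.
Qed.

Lemma positive_solution_not_cond2 (beta lam : nat -> R) : (1 <= m)%nat ->
  (forall i, (i < m)%nat ->
     liminf_inf_eq (fun t => Rint (p i) (tau i t) t) (beta i) /\ 0 < beta i /\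
     (forall l, exp (beta i * l) = l -> lam i <= l)) ->
  ~ limsup_0plus_gt (fun eps d => limsup_inf_gt (fun t => F2 m p tau lam eps t) d)
                    (/ (INR m ^ m)).
Proof.
  intros Hm Hbl [d [Hd Hfreq0]].
  destruct (Hfreq0 1 ltac:(lra)) as [eps [Heps [_ [d' [Hd' Hfreq]]]]].
  destruct (eventually_forall_lt m (fun k z => lam k - eps <= x (tau k z) / x z)) as [T HT].
  { intros k Hk. destruct (Hbl k Hk) as [Hlim [Hb Hmin]].
    apply (delay_ratio_lower_bound k (beta k) (lam k)); auto. }
  destruct (late_delays A) as [C0 [HC0 HC0tau]].
  set (C := Rmax C0 T).
  assert (HC : A <= C) by (eapply Rle_trans; [exact HC0 | apply Rmax_l]).
  set (g := fun xi => sumI m (fun k => (lam k - eps) * p k xi)).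
  assert (Hgc : forall y, C <= y -> continuous g y).
  { intros y Hy. apply cont_sumI. intros k Hk.
    apply cont_mult; [apply continuous_const | apply (ps_p_cont Hx); auto; lra]. }
  assert (Hgh : forall y, C <= y -> g y <= logderiv x x' y).
  { intros y Hy.
    assert (C0 <= y /\ T <= y) as [Hy0 HyT] by (split; eapply Rle_trans; eauto; [apply Rmax_l | apply Rmax_r]).
    rewrite logderiv_expand by lra. apply sumI_le. intros k Hk.
    rewrite Rmult_comm. apply Rmult_le_compat_l; [apply (ps_p_nonneg Hx); auto; lra | apply HT; auto]. }
  destruct (Fg_eventually_le g C HC Hgc Hgh Hm) as [E HE].
  destruct (Hfreq E) as [t [Ht Hdt]].
  specialize (HE t Ht). change (Fg m p tau g t) with (F2 m p tau lam eps t) in HE. lra.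
Qed.

End PositiveSolution.

Lemma constant_sign (f : R -> R) (b : R) :
  (forall z, b <= z -> continuous f z) -> (forall z, b <= z -> f z <> 0) ->
  forall c, b <= c -> 0 < f b * f c.
Proof.
  intros Hc Hnz c Hbc.
  assert (Hb := Hnz b (Rle_refl b)). assert (Hcz := Hnz c Hbc).
  destruct (Rlt_or_le 0 (f b * f c)) as [|Hneg]; auto. exfalso.
  destruct Hbc as [Hbc | <-]; [|nra].
  assert (Hcont : forall h : R -> R, (forall z, b <= z -> continuous h z) ->
                    forall a, b <= a <= c -> continuity_pt h a)
    by (intros h Hh a Ha; apply continuity_pt_filterlim, Hh; lra).
  destruct (Rlt_or_le (f b) 0) as [Hfb | Hfb].
  - destruct (Ranalysis5.IVT_interv f b c (Hcont f Hc) Hbc Hfb ltac:(nra)) as [z [Hz Hfz]].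
    apply (Hnz z); [lra | exact Hfz].
  - destruct (Ranalysis5.IVT_interv (fun z => - f z) b c
                (Hcont _ (fun z Hz => cont_opp f z (Hc z Hz))) Hbc ltac:(lra) ltac:(nra))
      as [z [Hz Hfz]].
    apply (Hnz z); [lra | lra].
Qed.

Section Equation.

Variables (m : nat) (t0 : R) (p tau : nat -> R -> R).
Hypothesis Hp_cont : forall i, (i < m)%nat -> cont_on_from (p i) t0.
Hypothesis Htau_cont : forall i, (i < m)%nat -> cont_on_from (tau i) t0.
Hypothesis Hp_nonneg : forall i t, (i < m)%nat -> t0 <= t -> 0 <= p i t.
Hypothesis Htau_le : forall i t, (i < m)%nat -> t0 <= t -> tau i t <= t.
Hypothesis Htau_lim : forall i, (i < m)%nat -> forall M, exists T, forall t, T <= t -> M <= tau i t.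
Hypothesis Htau_mono : forall i s t, (i < m)%nat -> t0 <= s -> s <= t -> tau i s <= tau i t.

(* (E) is linear: a solution of constant sign sgn on [b, oo) (b > t0)
   becomes a positive solution after multiplication by sgn. *)
Lemma signed_positive_solution (x x' : R -> R) (b sgn : R) : t0 < b ->
  (forall z, b <= z -> is_derive x z (x' z)) ->
  (forall z, b <= z -> continuous x' z) ->
  (forall z, b <= z -> x' z = - sumI m (fun i => p i z * x (tau i z))) ->
  (forall z, b <= z -> 0 < sgn * x z) ->
  positive_solution m p tau (fun z => sgn * x z) (fun z => sgn * x' z) b.
Proof.
  intros Hb Hd Hc Heq Hpos. constructor.
  - intros i z Hi Hz. apply (cont_on_from_continuous _ t0); auto; lra.
  - intros i z Hi Hz. apply (cont_on_from_continuous _ t0); auto; lra.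
  - intros i z Hi Hz. apply Hp_nonneg; auto; lra.
  - intros i z Hi Hz. apply Htau_le; auto; lra.
  - intros i s z Hi Hs Hz. apply Htau_mono; auto; lra.
  - intros M. apply (eventually_forall_lt m (fun i z => M <= tau i z)).
    intros k Hk. apply Htau_lim; auto.
  - intros z Hz. apply is_derive_scal. auto.
  - intros z Hz. apply cont_mult; [apply continuous_const | auto].
  - intros z Hz. rewrite Heq by exact Hz. rewrite <- Ropp_mult_distr_r, sumI_mult_l.
    f_equal. apply sumI_ext. intros; ring.
  - exact Hpos.
Qed.

(* A non-oscillatory solution is eventually nonzero, hence (by continuity)
   of constant sign, so up to sign it is an eventually positive solution. *)
Lemma nonoscillatory_positive_solution (x : R -> R) (T0 : R) :
  is_solution m t0 p tau x T0 -> ~ oscillatory x T0 ->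
  exists y y' b, positive_solution m p tau y y' b.
Proof.
  intros [HT0 [Hxc [T1 [_ [x' [Hx'c [Hxd Heq]]]]]]] Hno.
  assert (Hnz : exists T, forall t, T <= t -> T0 <= t -> x t <> 0).
  { apply NNPP. intros Hn. apply Hno. intros T. apply NNPP. intros Hn2. apply Hn.
    exists T. intros t Ht Ht0 Hx. apply Hn2. exists t. auto. }
  destruct Hnz as [T HT].
  set (b := Rmax (Rmax t0 T0) (Rmax T1 T) + 1).
  assert (t0 < b /\ T0 < b /\ T1 < b /\ T < b) as [Hb0 [HbT0 [HbT1 HbT]]].
  { unfold b. pose proof (Rmax_l t0 T0). pose proof (Rmax_r t0 T0).
    pose proof (Rmax_l T1 T). pose proof (Rmax_r T1 T).
    pose proof (Rmax_l (Rmax t0 T0) (Rmax T1 T)). pose proof (Rmax_r (Rmax t0 T0) (Rmax T1 T)).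
    lra. }
  assert (Hsign : forall c, b <= c -> 0 < x b * x c).
  { apply constant_sign.
    - intros z Hz. apply (cont_on_from_continuous x T0); auto; lra.
    - intros z Hz. apply HT; lra. }
  exists (fun z => x b * x z), (fun z => x b * x' z), b.
  apply signed_positive_solution; auto.
  - intros z Hz. apply (deriv_within_from_is_derive x T1); [apply Hxd |]; lra.
  - intros z Hz. apply (cont_on_from_continuous x' T1); auto; lra.
  - intros z Hz. specialize (Heq z ltac:(lra)). lra.
Qed.

End Equation.

Theorem theorem3p3 (m : nat) (t0 : R) (p tau : nat -> R -> R)
  (Hm : (1 <= m)%nat)
  (Hp_cont : forall i, (i < m)%nat -> cont_on_from (p i) t0)
  (Htau_cont : forall i, (i < m)%nat -> cont_on_from (tau i) t0)
  (Hp_nonneg : forall i t, (i < m)%nat -> t0 <= t -> 0 <= p i t)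
  (Htau_nonneg : forall i t, (i < m)%nat -> t0 <= t -> 0 <= tau i t)
  (Htau_le : forall i t, (i < m)%nat -> t0 <= t -> tau i t <= t)
  (Htau_lim : forall i, (i < m)%nat ->
     forall M, exists T, forall t, T <= t -> M <= tau i t)
  (Htau_mono : forall i s t, (i < m)%nat -> t0 <= s -> s <= t -> tau i s <= tau i t)
  (Hcond :
     limsup_inf_gt (F1 m p tau) (/ (INR m ^ m))
     \/
     exists (beta lam : nat -> R),
       (forall i, (i < m)%nat ->
          liminf_inf_eq (fun t => Rint (p i) (tau i t) t) (beta i) /\
          0 < beta i /\ beta i <= exp (-1) /\
          exp (beta i * lam i) = lam i /\
          (forall l, exp (beta i * l) = l -> lam i <= l)) /\
       limsup_0plus_gt (fun eps d => limsup_inf_gt (fun t => F2 m p tau lam eps t) d)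
                       (/ (INR m ^ m))) :
  forall (x : R -> R) (T0 : R), is_solution m t0 p tau x T0 -> oscillatory x T0.
Proof.
  intros x T0 Hsol. apply NNPP. intros Hno.
  destruct (nonoscillatory_positive_solution m t0 p tau Hp_cont Htau_cont Hp_nonneg
              Htau_le Htau_lim Htau_mono x T0 Hsol Hno) as [y [y' [b Hy]]].
  destruct Hcond as [H1 | [beta [lam [Hbl H2]]]].
  - exact (positive_solution_not_cond1 m p tau y y' b Hy Hm H1).
  - apply (positive_solution_not_cond2 m p tau y y' b Hy beta lam Hm); [|exact H2].
    intros i Hi. destruct (Hbl i Hi) as [Hlim [Hb [_ [_ Hmin]]]]. auto.
Qed.
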